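(* Let $p$ be an odd prime and $\alpha>1$ an integer with $\gcd(p,\alpha)=1$, let $\gamma=\operatorname{ord}_p(\alpha)$, and let $\tau>0$ be the integer with $p^{\tau}\,\|\,\alpha^\gamma-1$. Then for every integer $k\geq 0$, $$\left\{c_{\tau, k}\big((\alpha^b)_p\big) \;\middle|\; 0\leq b < \gamma p^k \right\} = \Lambda_k .$$
   Context: $p^k\,\|\, n$ means $p^k\mid n$ and $p^{k+1}\nmid n$. For a nonnegative integer $m$, $(m)_p$ denotes its base-$p$ representation $m=\sum_{i\ge0}a_ip^i$ with $0\le a_i<p$, viewed as an infinite digit sequence $(a_i)_{i\ge0}$ (padded with zeros). For such a digit sequence $a=(a_i)$ and integers $\tau\ge1,k\ge0$, define $c_{\tau,k}(a)=\langle a_{\tau+k-1},\dots,a_{\tau+1},a_\tau,a_0\rangle$ (a tuple of length $k+1$: the digits in positions $\tau+k-1$ down to $\tau$, followed by the digit in position $0$). Let $\delta=\{\alpha^j \bmod p : j\in\mathbb{Z}\}$ be the set of residues in $\{0,\dots,p-1\}$ generated by $\alpha$ modulo $p$. $\Lambda_k$ is the set of tuples $\langle \sigma_k,\sigma_{k-1},\dots,\sigma_1,\sigma_0\rangle$ with $\sigma_0\in\delta$ and $0\le\sigma_i<p$ integers for $1\le i\le k$. *)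

From mathcomp Require Import all_boot.
Set Implicit Arguments. Unset Strict Implicit. Unset Printing Implicit Defensive.

Definition digit (p m i : nat) : nat := (m %/ p ^ i) %% p.

(* c_{tau,k}((m)_p) = <a_{tau+k-1}, ..., a_tau, a_0> as a list of length k+1. *)
Definition ctk (p tau k m : nat) : seq nat :=
  [seq digit p m (tau + (k - 1 - j)) | j <- iota 0 k] ++ [:: digit p m 0].

(* delta = { alpha^j mod p : j in Z } as residues in {0,...,p-1}.
   For j >= 0 : r = alpha^j mod p; for j = -j' < 0 : r is the residue
   with r * alpha^j' = 1 (mod p). *)
Definition in_delta (p alpha r : nat) : Prop :=
  r < p /\
  ((exists j : nat, r = alpha ^ j %% p) \/
   (exists j : nat, r * alpha ^ j = 1 %[mod p])).

(* Lambda_k : tuples <s_k, ..., s_1, s_0> with s_0 in delta, 0 <= s_i < p. *)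
Definition in_Lambda (p alpha k : nat) (s : seq nat) : Prop :=
  size s = k.+1 /\ all (fun x => x < p) s /\ in_delta p alpha (last 0 s).

From mathcomp Require Import all_boot.
From mathcomp Require Import zify ring.

(* Write x = alpha^gamma = 1 + p^tau u with p not dividing u.  Since p is odd,
   each p-th power raises the exact power of p dividing x - 1 by one, while
   powers prime to p keep it; hence x^d = 1 (mod p^(tau+k)) forces p^k | d.
   So for a fixed r < gamma the p^k numbers alpha^(r + gamma m), m < p^k, are
   pairwise incongruent modulo p^(tau+k), yet congruent modulo p^tau: they
   share their digits below tau and, by counting, realise every string of
   digits in positions tau, ..., tau+k-1.  Their last digit is alpha^r mod p,
   which runs through delta as r does. *)

Set Implicit Arguments.
Unset Strict Implicit.
Unset Printing Implicit Defensive.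

Lemma digit_lt p m i : 0 < p -> digit p m i < p.
Proof. exact: ltn_pmod. Qed.

Lemma digit0 p m : digit p m 0 = m %% p.
Proof. by rewrite /digit expn0 divn1. Qed.

Lemma modnM_split y a b : 0 < a -> 0 < b ->
  y %% (a * b) = y %% a + a * (y %/ a %% b).
Proof.
move=> a_gt0 b_gt0.
have y_eq : y = y %/ a %/ b * (a * b) + (a * (y %/ a %% b) + y %% a).
  by rewrite {1}(divn_eq y a) {1}(divn_eq (y %/ a) b); ring.
have lt_ab : a * (y %/ a %% b) + y %% a < a * b.
  have := ltn_pmod (y %/ a) b_gt0; have := ltn_pmod y a_gt0; nia.
by rewrite {1}y_eq modnMDl modn_small // addnC.
Qed.

Lemma eq_mod_high_digits p t k x y : 0 < p -> x = y %[mod p ^ t] ->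
  (forall i, i < k -> digit p x (t + i) = digit p y (t + i)) ->
  x = y %[mod p ^ (t + k)].
Proof.
move=> p_gt0 eq_low; elim: k => [|k IHk] eq_dig; first by rewrite addn0.
rewrite addnS expnS mulnC !modnM_split ?expn_gt0 ?p_gt0 //.
rewrite -/(digit p x (t + k)) -/(digit p y (t + k)) eq_dig // IHk // => i ltik.
exact/eq_dig/ltnW.
Qed.

Lemma eq_modMl_coprime q a x y : coprime q a ->
  a * x = a * y %[mod q] -> x = y %[mod q].
Proof.
move=> co_qa; wlog le_xy : x y / x <= y.
  by move=> W eq_axy; case: (leqP x y) => [|/ltnW] le; [|apply/esym]; apply: W.
move=> /eqP; rewrite eq_sym eqn_mod_dvd ?leq_mul2l ?le_xy ?orbT //.
by rewrite -mulnBr Gauss_dvdr // -eqn_mod_dvd // eq_sym => /eqP.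
Qed.

Lemma expn_period a g r m q : a ^ g = 1 %[mod q] -> a ^ (r + g * m) = a ^ r %[mod q].
Proof.
by move=> ag1; rewrite expnD expnM -modnMmr -modnXm ag1 modnXm exp1n modnMmr muln1.
Qed.

Lemma expn1D_cubic y w :
  exists c, (1 + y) ^ w = 1 + w * y + 'C(w, 2) * y ^ 2 + y ^ 3 * c.
Proof.
elim: w => [|w [c IHw]]; first by exists 0; rewrite bin0n !(muln0, mul0n, addn0).
exists (c + 'C(w, 2) + y * c).
by rewrite expnSr IHw binS bin1 -addn1; ring.
Qed.

Definition unit_level p t x := exists2 u, x = 1 + p ^ t * u & ~~ (p %| u).

Section UnitLevel.
Variable p : nat.
Hypothesis p_prime : prime p.

Lemma unit_level_exact t x : 0 < x -> p ^ t %| x - 1 -> ~~ (p ^ t.+1 %| x - 1) ->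
  unit_level p t x.
Proof.
move=> x_gt0 /dvdnP [u def_u] ndvd; exists u; first by rewrite mulnC -def_u subnKC.
apply: contra ndvd; rewrite def_u => /dvdnP [v ->].
by rewrite -mulnA -expnS dvdn_mull.
Qed.

Lemma unit_level_mod t x : unit_level p t x -> x = 1 %[mod p ^ t].
Proof. by case=> u -> _; rewrite addnC mulnC modnMDl. Qed.

Lemma unit_level_nmod t x : unit_level p t x -> x != 1 %[mod p ^ t.+1].
Proof.
case=> u -> p_ndvd_u.
by rewrite eqn_mod_dvd ?leq_addr // addKn expnSr dvdn_pmul2l ?expn_gt0 ?prime_gt0.
Qed.

Lemma unit_level_coprime t x : 0 < t -> unit_level p t x -> coprime p x.
Proof.
case: t => [//|t] _ [u -> _].
rewrite -coprime_modr expnS -mulnA addnC mulnC modnMDl.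
by rewrite modn_small ?coprimen1 ?prime_gt1.
Qed.

Lemma unit_levelX_coprime t x w : 0 < t -> unit_level p t x -> ~~ (p %| w) ->
  unit_level p t (x ^ w).
Proof.
case: t => [//|t] _ [u -> p_ndvd_u] p_ndvd_w.
have [c ->] := expn1D_cubic (p ^ t.+1 * u) w.
exists (w * u + p * ('C(w, 2) * p ^ t * u ^ 2 + p * p ^ t * p ^ t * u ^ 3 * c)).
  by rewrite !expnS; ring.
rewrite dvdn_addl; last exact: dvdn_mulr.
by rewrite Euclid_dvdM // negb_or p_ndvd_w.
Qed.

Hypothesis p_odd : odd p.

(* Oddness of p is what makes p divide 'C(p, 2). *)
Lemma unit_levelXp t x : 0 < t -> unit_level p t x -> unit_level p t.+1 (x ^ p).
Proof.
case: t => [//|t] _ [u -> p_ndvd_u].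
have [c ->] := expn1D_cubic (p ^ t.+1 * u) p.
have binp2 : 'C(p, 2) = p * p./2.
  by rewrite bin2 -{2}(odd_double_half p) p_odd /= -doubleMr doubleK.
exists (u + p * (p./2 * p ^ t * u ^ 2 + p ^ t * p ^ t * u ^ 3 * c)).
  by rewrite binp2 !expnS; ring.
by rewrite dvdn_addl // dvdn_mulr.
Qed.

Lemma unit_levelXpn t x j : 0 < t -> unit_level p t x ->
  unit_level p (t + j) (x ^ (p ^ j)).
Proof.
move=> t_gt0 xt; elim: j => [|j IHj]; first by rewrite addn0 expn1.
by rewrite expnSr expnM addnS; apply: unit_levelXp; rewrite ?addn_gt0 ?t_gt0.
Qed.

Lemma unit_level_order_dvd t x k d : 0 < t -> unit_level p t x -> 0 < d ->
  x ^ d = 1 %[mod p ^ (t + k)] -> p ^ k %| d.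
Proof.
move=> t_gt0 xt d_gt0 xd1.
have [w co_pw def_d] := pfactor_coprime p_prime d_gt0.
set j := logn p d in def_d; rewrite def_d dvdn_mull //.
case: (leqP k j) => [/dvdn_exp2l // | lt_jk]; exfalso.
have: unit_level p (t + j) ((x ^ (p ^ j)) ^ w).
  apply: unit_levelX_coprime; first by rewrite addn_gt0 t_gt0.
    exact: unit_levelXpn.
  by rewrite -prime_coprime.
move/unit_level_nmod/negP; apply; apply/eqP.
have dvd_tk : p ^ (t + j).+1 %| p ^ (t + k) by rewrite dvdn_exp2l // -addnS leq_add2l.
by rewrite -expnM mulnC -def_d -(modn_dvdm _ dvd_tk) xd1 modn_dvdm.
Qed.

Lemma unit_level_expn_inj t x y k a b : 0 < t -> unit_level p t x -> coprime p y ->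
  a < p ^ k -> b < p ^ k -> y * x ^ a = y * x ^ b %[mod p ^ (t + k)] -> a = b.
Proof.
move=> t_gt0 xt co_py; wlog le_ab : a b / a <= b.
  by move=> W ? ? eq_ab; case: (leqP a b) => [|/ltnW] le; [|apply/esym]; apply: W.
move=> _ lt_b eq_yx.
have xba1 : x ^ (b - a) = 1 %[mod p ^ (t + k)].
  apply/esym/(@eq_modMl_coprime _ (y * x ^ a)).
    by rewrite coprimeXl // coprimeMr co_py coprimeXr // (unit_level_coprime t_gt0 xt).
  by rewrite muln1 -mulnA -expnD subnKC.
case: (posnP (b - a)) => [/eqP | ba_gt0].
  by rewrite subn_eq0 => le_ba; apply/eqP; rewrite eqn_leq le_ab.
have := dvdn_leq ba_gt0 (unit_level_order_dvd t_gt0 xt ba_gt0 xba1).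
by move: lt_b le_ab; clear; lia.
Qed.

End UnitLevel.

Section HighDigitsOnto.
Variables (p t k : nat) (f : nat -> nat).
Hypothesis p_gt0 : 0 < p.
Hypothesis f_low : forall m m', f m = f m' %[mod p ^ t].
Hypothesis f_inj : forall m m', m < p ^ k -> m' < p ^ k ->
  f m = f m' %[mod p ^ (t + k)] -> m = m'.

(* Pigeonhole: the p^k values m < p^k map injectively to the p^k digit strings. *)
Lemma high_digits_onto (d : nat -> nat) : (forall i, i < k -> d i < p) ->
  exists2 m, m < p ^ k & forall i, i < k -> digit p (f m) (t + i) = d i.
Proof.
move=> d_lt.
pose F (m : 'I_(p ^ k)) : {ffun 'I_k -> 'I_p} :=
  [ffun i : 'I_k => Ordinal (digit_lt (f m) (t + i) p_gt0)].
have F_inj : injective F.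
  move=> m1 m2 /ffunP eqF; apply/val_inj/f_inj; rewrite ?ltn_ord //.
  apply: eq_mod_high_digits => // i lt_ik.
  by have := eqF (Ordinal lt_ik); rewrite !ffunE => /(congr1 val).
pose D : {ffun 'I_k -> 'I_p} := [ffun i : 'I_k => Ordinal (d_lt i (ltn_ord i))].
have /codomP [m /ffunP eqD] : D \in codom F.
  by apply: inj_card_onto; rewrite // card_ffun !card_ord.
exists m => // i lt_ik.
by have := eqD (Ordinal lt_ik); rewrite !ffunE => /(congr1 val).
Qed.

End HighDigitsOnto.

Lemma ctk_in_Lambda p alpha tau k m : 0 < p -> in_delta p alpha (m %% p) ->
  in_Lambda p alpha k (ctk p tau k m).
Proof.
move=> p_gt0 delta_m; rewrite /in_Lambda /ctk last_cat /=.
split; first by rewrite size_cat size_map size_iota addn1.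
split; last by rewrite digit0.
rewrite all_cat /= digit_lt // !andbT.
by apply/allP => _ /mapP [i _ ->]; apply: digit_lt.
Qed.

Lemma eq_ctk p tau k m s : size s = k.+1 ->
  (forall i, i < k -> nth 0 s (k - 1 - i) = digit p m (tau + i)) ->
  last 0 s = digit p m 0 -> s = ctk p tau k m.
Proof.
move=> size_s eq_high eq_last; apply: (@eq_from_nth _ 0).
  by rewrite size_s /ctk size_cat size_map size_iota addn1.
move=> i; rewrite size_s ltnS leq_eqVlt => /orP [/eqP -> | lt_ik].
  rewrite -[k]/(k.+1.-1) -size_s nth_last eq_last.
  by rewrite /ctk nth_cat size_map size_iota ltnn subnn.
rewrite /ctk nth_cat size_map size_iota lt_ik (nth_map 0) ?size_iota // nth_iota //.
have lt_k1i : k - 1 - i < k by move: lt_ik; clear; lia.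
by rewrite add0n -(eq_high _ lt_k1i); congr nth; move: lt_ik; clear; lia.
Qed.

Lemma in_delta_expn p alpha gamma r : 0 < gamma -> coprime p alpha ->
  alpha ^ gamma = 1 %[mod p] -> in_delta p alpha r ->
  exists2 j, j < gamma & r = alpha ^ j %% p.
Proof.
move=> gamma_gt0 co_pa alpha_g [lt_rp delta_r].
have [e def_r] : exists e, r = alpha ^ e %% p.
  case: delta_r => [[e ->] | [j rj1]]; first by exists e.
  have le_j : j <= gamma * j by rewrite leq_pmull.
  exists (gamma * j - j); rewrite -(modn_small lt_rp).
  apply: (@eq_modMl_coprime _ (alpha ^ j)); first by rewrite coprimeXr.
  by rewrite mulnC rj1 -expnD subnKC // -[gamma * j]add0n expn_period.
exists (e %% gamma); first by rewrite ltn_pmod.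
by rewrite def_r {1}(divn_eq e gamma) addnC mulnC expn_period.
Qed.

Theorem theorem2p3 (p alpha gamma tau : nat)
  (hp : prime p) (hodd : odd p) (halpha : 1 < alpha) (hcop : coprime p alpha)
  (hgpos : 0 < gamma) (hg : alpha ^ gamma = 1 %[mod p])
  (hgmin : forall n, 0 < n -> alpha ^ n = 1 %[mod p] -> gamma <= n)
  (htpos : 0 < tau) (htdvd : p ^ tau %| alpha ^ gamma - 1)
  (htndvd : ~~ (p ^ tau.+1 %| alpha ^ gamma - 1)) :
  forall k : nat, forall s : seq nat,
    (exists2 b, b < gamma * p ^ k & s = ctk p tau k (alpha ^ b)) <->
    in_Lambda p alpha k s.
Proof.
move=> k s; have p_gt0 := prime_gt0 hp; split.
  case=> b _ ->; apply: ctk_in_Lambda => //.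
  by split; [rewrite ltn_pmod | left; exists b].
case=> size_s [all_s delta_s].
have [r lt_rg last_s] := in_delta_expn hgpos hcop hg delta_s.
have level : unit_level p tau (alpha ^ gamma).
  by apply: unit_level_exact; rewrite ?expn_gt0 ?(ltnW halpha).
pose f m := alpha ^ (r + gamma * m).
have f_low m m' : f m = f m' %[mod p ^ tau].
  by rewrite /f !expn_period //; apply: unit_level_mod.
have f_inj m m' : m < p ^ k -> m' < p ^ k -> f m = f m' %[mod p ^ (tau + k)] -> m = m'.
  rewrite /f !(expnD alpha) !(expnM alpha).
  by apply: (unit_level_expn_inj hp hodd htpos level); rewrite coprimeXr.
pose d i := nth 0 s (k - 1 - i).
have [|m lt_m digits_m] := high_digits_onto p_gt0 f_low f_inj (d := d).
  by move=> i lt_ik; apply: (all_nthP 0 all_s); rewrite size_s; move: lt_ik; clear; lia.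
exists (r + gamma * m).
  have : gamma * m.+1 <= gamma * p ^ k by rewrite leq_mul2l lt_m orbT.
  by rewrite mulnS; move: lt_rg; clear; lia.
apply: eq_ctk => // [i lt_ik|]; first by rewrite digits_m.
by rewrite last_s digit0 expn_period.
Qed.
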